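(* Let $d\ge 1$, $T\in\mathbb{Q}^d_{\ge 0}$, and let $\mathcal{V}_L\subseteq\mathbb{Q}^d_{\ge 0}$ be a finite set that is 3-incompatible with respect to $T$. Let $m$ be an integer with $|\mathcal{V}_L|/2\le m\le|\mathcal{V}_L|$ and set $C_2=|\mathcal{V}_L|-m$. Let $0\le p\le m$ and let $s(1),\dots,s(p)\in\mathbb{Q}^d_{\ge 0}$ with $s(i)\le T$ componentwise. Consider $m$ containers: for $i\in\{1,\dots,p\}$ a container of capacity $s(i)$, and $m-p$ further containers of capacity $T$. Let $\mathcal{C}=\{1,\dots,p\}$ if $p=m$, and $\mathcal{C}=\{1,\dots,p\}\cup\{\top\}$ with $s(\top)=T$ if $p<m$. Build the graph $G$ with vertex set $\mathcal{V}_L\cup\mathcal{V}_L'\cup\mathcal{B}$, where $\mathcal{V}_L'=\{v'\mid v\in\mathcal{V}_L\}$ is a set of new copies and $\mathcal{B}$ is a set of $2C_2$ new vertices; for each $c\in\mathcal{C}$ let $E_c=\{\{u,v\}\mid u\neq v\in\mathcal{V}_L,\ u+v\le s(c)\}\cup\{\{v,v'\}\mid v\in\mathcal{V}_L,\ v\le s(c)\}$ (inequalities componentwise), let $E_\bot=\{\{v',b\}\mid v'\in\mathcal{V}_L',b\in\mathcal{B}\}$, and $E(G)=E_\bot\cup\bigcup_{c\in\mathcal{C}}E_c$. Let the color set be $\mathcal{C}'=\mathcal{C}\cup\{\bot\}$ if $C_2>0$ and $\mathcal{C}'=\mathcal{C}$ if $C_2=0$, let $\lambda(e)=\{c\in\mathcal{C}'\mid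 e\in E_c\}$, $\gamma(e,c)=1$ for all $e$ and $c\in\lambda(e)$, and $\ell=|\mathcal{V}_L|+C_2$. Then there is an assignment of all vectors of $\mathcal{V}_L$ to the $m$ containers such that every container receives at least one vector and the sum of the vectors in each container is componentwise at most its capacity if and only if $(G,\mathcal{C}',\lambda,\gamma,\ell)$ is a ''yes''-instance of Perfect Over-The-Rainbow Matching.
   Context: A set $\mathcal{V}'\subseteq\mathbb{Q}^d_{\ge 0}$ is 3-incompatible with respect to $T$ if for any three distinct $u,v,w\in\mathcal{V}'$ there is a coordinate $j$ with $u^j+v^j+w^j>T^j$. Perfect Over-The-Rainbow Matching: given a graph $G$, a color set $\mathcal{C}'$, $\lambda:E(G)\to 2^{\mathcal{C}'}\setminus\{\emptyset\}$, weights $\gamma(e,c)\ge 0$ for $c\in\lambda(e)$, and a number $\ell$, the instance is a ''yes''-instance iff there exist a perfect matching $M$ of $G$ and a surjective map $\xi:M\to\mathcal{C}'$ with $\xi(e)\in\lambda(e)$ for all $e\in M$ and $\sum_{e\in M}\gamma(e,\xi(e))\le\ell$. *)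

From HB Require Import structures.
From mathcomp Require Import all_boot all_order all_algebra.
Set Implicit Arguments. Unset Strict Implicit. Unset Printing Implicit Defensive.
Import Order.TTheory GRing.Theory Num.Theory.
Local Open Scope ring_scope.

Definition vle (d : nat) (u w : 'rV[rat]_d) : bool := [forall j, u 0 j <= w 0 j].
Definition nonneg (d : nat) (u : 'rV[rat]_d) : bool := vle 0 u.

(* The finite set V_L is given as an injective family v : 'I_n -> Q^d (|V_L| = n). *)
Definition three_incompatible (d n : nat) (T : 'rV[rat]_d) (v : 'I_n -> 'rV[rat]_d) : Prop :=
  forall i j k : 'I_n, i != j -> j != k -> i != k ->
    exists c : 'I_d, T 0 c < (v i + v j + v k) 0 c.

(* Graph: vertex finType V, edges E : {set {set V}} (each edge a 2-element set). *)
Definition perfect_matching (V : finType) (E M : {set {set V}}) : Prop :=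
  M \subset E /\ forall x : V, #|[set e in M | x \in e]| = 1%N.

Definition potrm_yes (V K : finType) (E : {set {set V}}) (Cs : {set K})
  (lam : {set V} -> {set K}) (gam : {set V} -> K -> rat) (l : rat) : Prop :=
  exists (M : {set {set V}}) (xi : {set V} -> K),
    [/\ perfect_matching E M,
        (forall e, e \in M -> xi e \in Cs),
        (forall c, c \in Cs -> exists2 e, e \in M & xi e = c),
        (forall e, e \in M -> xi e \in lam e)
      & \sum_(e in M) gam e (xi e) <= l].

(* vertices: V_L (inl (inl i)), V_L' (inl (inr i)), B (inr b), |B| = 2*C2 *)
Definition vtx (n C2 : nat) : finType := (('I_n + 'I_n) + 'I_(2 * C2))%type.
Definition vL {n C2 : nat} (i : 'I_n) : vtx n C2 := inl (inl i).
Definition vL' {n C2 : nat} (i : 'I_n) : vtx n C2 := inl (inr i).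
Definition vB {n C2 : nat} (b : 'I_(2 * C2)) : vtx n C2 := inr b.

(* colors: inl i = container color i in {1..p}; inr true = top; inr false = bot *)
Definition color (p : nat) : finType := ('I_p + bool)%type.
Definition colTop {p : nat} : color p := inr true.
Definition colBot {p : nat} : color p := inr false.

Definition Cset (p m : nat) : {set color p} :=
  [set c : color p | match c with inl _ => true | inr true => (p < m)%N | inr false => false end].
Definition Cprime (p m C2 : nat) : {set color p} :=
  Cset p m :|: (if (0 < C2)%N then [set colBot] else set0).

Definition scap (d p : nat) (T : 'rV[rat]_d) (s : 'I_p -> 'rV[rat]_d) (c : color p) : 'rV[rat]_d :=
  match c with inl i => s i | inr _ => T end.

Definition Ecap (d n C2 : nat) (v : 'I_n -> 'rV[rat]_d) (S : 'rV[rat]_d) : {set {set vtx n C2}} :=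
  [set [set vL ij.1; vL ij.2] | ij : 'I_n * 'I_n & (ij.1 != ij.2) && vle (v ij.1 + v ij.2) S]
  :|: [set [set vL i; vL' i] | i : 'I_n & vle (v i) S].

Definition Ebot (n C2 : nat) : {set {set vtx n C2}} :=
  [set [set vL' ib.1; vB ib.2] | ib : 'I_n * 'I_(2 * C2)].

Definition Ecol (d n C2 p : nat) (T : 'rV[rat]_d) (v : 'I_n -> 'rV[rat]_d)
  (s : 'I_p -> 'rV[rat]_d) (c : color p) : {set {set vtx n C2}} :=
  match c with inr false => Ebot n C2 | _ => Ecap C2 v (scap T s c) end.

Definition EG (d n C2 p m : nat) (T : 'rV[rat]_d) (v : 'I_n -> 'rV[rat]_d)
  (s : 'I_p -> 'rV[rat]_d) : {set {set vtx n C2}} :=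
  Ebot n C2 :|: \bigcup_(c in Cset p m) Ecol C2 T v s c.

Definition lam (d n C2 p m : nat) (T : 'rV[rat]_d) (v : 'I_n -> 'rV[rat]_d)
  (s : 'I_p -> 'rV[rat]_d) (e : {set vtx n C2}) : {set color p} :=
  [set c in Cprime p m C2 | e \in Ecol C2 T v s c].

Definition cont_cap (d p q : nat) (T : 'rV[rat]_d) (s : 'I_p -> 'rV[rat]_d)
  (k : ('I_p + 'I_q)%type) : 'rV[rat]_d :=
  match k with inl i => s i | inr _ => T end.

(* In a packing no container holds three vectors (by 3-incompatibility and
   nonnegativity), so each of the m nonempty containers holds one or two vectors
   and exactly C2 = n - m of them hold two.  Such a packing is encoded by an
   involution of the vertices: two vectors u, w sharing a container are matched
   by the edge uw, a lonely vector u by uu', and the 2 C2 copies u' of paired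
   vectors are matched bijectively with B.  Edges touching V_L get the colour of
   their container, the others get the colour ⊥; there are n + C2 edges.
   Conversely, weigh the vertices of V_L and V_L' by 1 and those of B by -1.
   Edges of E_⊥ weigh 0 and all other edges weigh 2, so a perfect matching has
   exactly n - C2 = m edges not coloured ⊥.  Choosing one such edge of each
   colour i <= p as the container of capacity s(i), and sending the remaining
   ones to the containers of capacity T >= s(c), yields a packing. *)

From mathcomp Require Import all_boot all_order all_algebra.
From mathcomp Require Import zify.
Import Order.TTheory GRing.Theory Num.Theory.

Set Implicit Arguments. Unset Strict Implicit. Unset Printing Implicit Defensive.

Local Open Scope ring_scope.

Section PerfectMatching.
Variables (V : finType) (M : {set {set V}}).
Hypothesis M_cover : forall x : V, #|[set e in M | x \in e]| = 1%N.

Lemma perfect_matching_sum (R : nmodType) (F : V -> R) :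
  \sum_x F x = \sum_(e in M) \sum_(x in e) F x.
Proof.
transitivity (\sum_x \sum_(e in [set e in M | x \in e]) F x).
  by apply: eq_bigr => x _; rewrite sumr_const M_cover.
rewrite (exchange_big_dep (fun e => e \in M)) => [|x e _]; last by rewrite inE => /andP[].
by apply: eq_bigr => e eM; apply: eq_bigl => x; rewrite inE eM.
Qed.

Definition matched_edge (x : V) : {set V} := odflt set0 [pick e in M | x \in e].

Lemma matched_edgeP x : matched_edge x \in M /\ x \in matched_edge x.
Proof.
rewrite /matched_edge; case: pickP => [e /andP[] //| noe].
have := M_cover x; suff -> : [set e in M | x \in e] = set0 by rewrite cards0.
by apply/setP => e; rewrite !inE; have /= -> := noe e.
Qed.

Lemma matched_edge_uniq x e : e \in M -> x \in e -> e = matched_edge x.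
Proof.
move=> eM xe; have [mM xm] := matched_edgeP x.
have /eqP/cards1P[e0 M_x] := M_cover x.
have : e \in [set e in M | x \in e] by rewrite inE eM xe.
have : matched_edge x \in [set e in M | x \in e] by rewrite inE mM xm.
by rewrite M_x !inE => /eqP-> /eqP->.
Qed.

End PerfectMatching.

Section InvolutionMatching.
Variables (V : finType) (mate : V -> V).
Hypothesis mateK : involutive mate.

Definition mate_edges : {set {set V}} := [set [set x; mate x] | x : V].

Lemma mate_edges_cover x : #|[set e in mate_edges | x \in e]| = 1%N.
Proof.
apply/eqP/cards1P; exists [set x; mate x]; apply/setP => e; rewrite !inE.
apply/andP/eqP => [[/imsetP[y _ ->]]|->]; last by split; [apply: imset_f | rewrite !inE eqxx].
by rewrite !inE => /orP[]/eqP->; rewrite // mateK setUC.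
Qed.

Lemma card_mate_edges : (forall x, mate x != x) -> (#|mate_edges| * 2 = #|V|)%N.
Proof.
move=> mate_neq; have := perfect_matching_sum mate_edges_cover (fun=> 1%N).
rewrite sum1_card => ->; rewrite -sum_nat_const; apply: eq_bigr => _ /imsetP[x _ ->].
by rewrite sum1_card cards2 eq_sym mate_neq.
Qed.

End InvolutionMatching.

Lemma ord_enumeration (T : finType) (A : {set T}) k : #|A| = k ->
  exists g : 'I_k -> T, injective g /\ A =i codom g.
Proof.
move=> <-; exists enum_val; split=> [|x]; first exact: enum_val_inj.
apply/idP/codomP => [xA|[b ->]]; last exact: enum_valP.
by exists (enum_rank_in xA x); rewrite enum_rankK_in.
Qed.

Lemma extend_ord_injection (T : finType) (A : {set T}) p q (r : 'I_p -> T) :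
  injective r -> (forall j, r j \in A) -> #|A| = (p + q)%N ->
  exists E : 'I_p + 'I_q -> T,
    [/\ injective E, forall j, E (inl j) = r j & A =i codom E].
Proof.
move=> r_inj rA cardA.
have rA_sub : r @: setT \subset A by apply/subsetP => _ /imsetP[j _ ->].
have /ord_enumeration[g [g_inj A_g]] : #|A :\: r @: setT| = q.
  by rewrite cardsD (setIidPr rA_sub) card_imset // cardsT card_ord cardA addKn.
have g_notr b : g b \notin r @: setT.
  by have := codom_f g b; rewrite -A_g inE => /andP[].
exists (fun k => match k with inl j => r j | inr b => g b end); split=> //.
- case=> [j|b] [j'|b'] //= => [/r_inj->|rg|gr|/g_inj->] //.
    by have := g_notr b'; rewrite -rg imset_f.
  by have := g_notr b; rewrite gr imset_f.
- move=> x; apply/idP/codomP => [xA|[[j|b] ->]] //.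
    have [/imsetP[j _ ->]|xr] := boolP (x \in r @: setT); first by exists (inl j).
    have /codomP[b ->] : x \in codom g by rewrite -A_g inE xr.
    by exists (inr b).
  by have := codom_f g b; rewrite -A_g inE => /andP[].
Qed.

Section FibersOfSizeAtMostTwo.
Variables (I K : finType) (f : I -> K).
Hypothesis fiber3 :
  forall i j k, f j = f i -> f k = f i -> [|| j == i, k == i | k == j].

Definition fiber_partner (i : I) : option I := [pick j | (f j == f i) && (j != i)].

Lemma fiber_partnerP i j :
  fiber_partner i = Some j -> [/\ f j = f i, j != i & fiber_partner j = Some i].
Proof.
rewrite /fiber_partner; case: pickP => [j0 /andP[/eqP fj ji] [<-]|//]; split=> //.
case: pickP => [k /andP[/eqP fk kj]|noi]; last by have := noi i; rewrite fj eqxx eq_sym ji.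
congr Some; apply/eqP; have := fiber3 (esym fj) fk.
by rewrite eq_sym (negbTE ji) (negbTE kj).
Qed.

Lemma fiber_partner_None i l : fiber_partner i = None -> f l = f i -> l = i.
Proof.
rewrite /fiber_partner; case: pickP => // noj _ fl; apply/eqP.
by have := noj l; rewrite /= fl eqxx => /negbFE.
Qed.

Lemma big_fiber (R : nmodType) (F : I -> R) i :
  \sum_(l | f l == f i) F l = F i + oapp F 0 (fiber_partner i).
Proof.
case pi: (fiber_partner i) => [j|] /=.
  have [fj ji _] := fiber_partnerP pi.
  rewrite (bigD1 i) ?eqxx //= (bigD1 j) /= ?fj ?eqxx ?ji // big1 ?addr0 // => l.
  case/andP=> [/andP[/eqP fl li] lj]; have := fiber3 fj fl.
  by rewrite (negbTE ji) (negbTE li) (negbTE lj).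
rewrite (bigD1 i) ?eqxx //= big1 ?addr0 // => l /andP[/eqP fl].
by rewrite (fiber_partner_None pi fl) eqxx.
Qed.

Definition paired : {set I} := [set i | fiber_partner i != None].

Lemma card_paired : (forall k, exists i, f i = k) -> (#|paired| + 2 * #|K| = 2 * #|I|)%N.
Proof.
move=> f_onto.
have fiber_count k : (\sum_(l | f l == k) (l \in paired) + 2 = \sum_(l | f l == k) 2)%N.
  have [i <-] := f_onto k; rewrite !big_fiber.
  case pi: (fiber_partner i) => [j|] /=; last by rewrite inE pi.
  by have [_ _ pj] := fiber_partnerP pi; rewrite !inE pi pj.
have -> : #|paired| = (\sum_i (i \in paired))%N by rewrite -sum1_card big_mkcond.
rewrite [(2 * #|K|)%N]mulnC [(2 * #|I|)%N]mulnC -!sum_nat_const.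
rewrite !(partition_big f xpredT) //= -big_split /=.
by apply: eq_bigr => k _; rewrite fiber_count.
Qed.

End FibersOfSizeAtMostTwo.

Lemma vle_refl d (u : 'rV[rat]_d) : vle u u.
Proof. exact/forallP. Qed.

Lemma vle_trans d (u w z : 'rV[rat]_d) : vle u w -> vle w z -> vle u z.
Proof. by move=> /forallP uw /forallP wz; apply/forallP => j; apply: le_trans (uw j) (wz j). Qed.

Section Graph.
Variables (d n C2 p m : nat) (T : 'rV[rat]_d) (v : 'I_n -> 'rV[rat]_d) (s : 'I_p -> 'rV[rat]_d).
Hypothesis s_le_T : forall i, vle (s i) T.

Lemma scap_le c : vle (scap T s c) T.
Proof. by case: c => [i|b] /=; [exact: s_le_T | exact: vle_refl]. Qed.

Lemma cont_cap_le q (k : 'I_p + 'I_q) : vle (cont_cap T s k) T.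
Proof. by case: k => [i|b] /=; [exact: s_le_T | exact: vle_refl]. Qed.

Lemma EcapP S (e : {set vtx n C2}) : reflect
  ((exists a b, [/\ a != b, vle (v a + v b) S & e = [set vL a; vL b]]) \/
   (exists a, vle (v a) S /\ e = [set vL a; vL' a]))
  (e \in Ecap C2 v S).
Proof.
apply: (iffP setUP) => [[]/imsetP[]|[[a [b [ab vab ->]]]|[a [va ->]]]].
- by case=> a b; rewrite inE /= => /andP[ab vab] ->; left; exists a, b.
- by move=> a; rewrite inE => va ->; right; exists a.
- by left; apply/imsetP; exists (a, b); rewrite // inE ab.
- by right; apply/imsetP; exists a; rewrite // inE.
Qed.

(* [rewrite -!sum_eqE /=] evaluates equalities between vertices, which are nested
   [inl]/[inr] values. *)
Lemma Ecap_sum_le S (e : {set vtx n C2}) :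
  e \in Ecap C2 v S -> vle (\sum_(i | vL i \in e) v i) S.
Proof.
case/EcapP => [[a [b [ab vab ->]]]|[a [va ->]]].
  rewrite (eq_bigl (mem [set a; b])) => [|i]; last by rewrite !inE -!sum_eqE /= -!sum_eqE.
  by rewrite big_setU1 ?big_set1 ?inE //=.
rewrite (eq_bigl (pred1 a)) => [|i]; last by rewrite !inE -!sum_eqE /= -!sum_eqE /= orbF.
by rewrite big_pred1_eq.
Qed.

Lemma Ecap_hasL S (e : {set vtx n C2}) : e \in Ecap C2 v S -> exists i, vL i \in e.
Proof. by case/EcapP => [[a [b [_ _ ->]]]|[a [_ ->]]]; exists a; rewrite !inE eqxx. Qed.

Lemma Ebot_notL (e : {set vtx n C2}) i : e \in Ebot n C2 -> vL i \notin e.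
Proof. by case/imsetP => -[a b] _ ->; rewrite !inE -!sum_eqE. Qed.

Definition vtx_weight (x : vtx n C2) : int := if x is inr _ then -1 else 1.

Lemma sum_vtx_weight : \sum_x vtx_weight x = (n + n)%:Z - (2 * C2)%:Z.
Proof. by rewrite !big_sumType /= !sumr_const !card_ord mulNrn -natrD !natz. Qed.

Lemma Ecol_vtx_weight c e :
  e \in Ecol C2 T v s c -> \sum_(x in e) vtx_weight x = 2 *+ (c != colBot).
Proof.
have sum2 (x y : vtx n C2) :
    x != y -> \sum_(z in [set x; y]) vtx_weight z = vtx_weight x + vtx_weight y.
  by move=> xy; rewrite big_setU1 ?big_set1 // inE.
case: c => [j|[]] /=; last first.
  by case/imsetP => -[a b] _ ->; rewrite sum2 // -!sum_eqE.
all: by case/EcapP => [[a [b [ab _ ->]]]|[a [_ ->]]]; rewrite sum2 // -!sum_eqE.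
Qed.

Lemma Ecol_Cset c : c \in Cset p m -> Ecol C2 T v s c = Ecap C2 v (scap T s c).
Proof. by case: c => [j|[]] //; rewrite inE. Qed.

End Graph.

Lemma Cset_Cprime p m C2 c : c \in Cset p m -> c \in Cprime p m C2.
Proof. by move=> c_C; rewrite /Cprime inE c_C. Qed.

Lemma colBot_Cprime p m C2 : (0 < C2)%N -> colBot \in Cprime p m C2.
Proof. by move=> C2_gt0; rewrite /Cprime C2_gt0 !inE eqxx orbT. Qed.

Lemma lam_EG d n C2 p m (T : 'rV[rat]_d) (v : 'I_n -> 'rV[rat]_d) (s : 'I_p -> 'rV[rat]_d) e c :
  c \in lam m T v s e -> e \in @EG d n C2 p m T v s.
Proof.
move=> /setIdP[cC' ec]; rewrite /EG inE; move: cC'; rewrite /Cprime inE => /orP[cC|].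
  by apply/orP; right; apply/bigcupP; exists c.
by case: ifP => _; rewrite ?inE // => /eqP cbot; move: ec; rewrite cbot => ->.
Qed.

Section MatchingToPacking.
Variables (d n C2 p : nat) (T : 'rV[rat]_d) (v : 'I_n -> 'rV[rat]_d) (s : 'I_p -> 'rV[rat]_d).
Variables (M : {set {set vtx n C2}}) (xi : {set vtx n C2} -> color p).
Hypothesis M_cover : forall x, #|[set e in M | x \in e]| = 1%N.
Hypothesis M_coloured : forall e, e \in M -> e \in Ecol C2 T v s (xi e).

Definition coloured_edges : {set {set vtx n C2}} := [set e in M | xi e != colBot].

Lemma card_coloured_edges : (#|coloured_edges| + C2 = n)%N.
Proof.
have := perfect_matching_sum M_cover (@vtx_weight n C2); rewrite sum_vtx_weight.
rewrite (eq_bigr (fun e => 2 *+ (xi e != colBot))) => [|e /M_coloured/Ecol_vtx_weight //].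
rewrite sumrMnr; suff -> : (\sum_(e in M) (xi e != colBot))%N = #|coloured_edges| by lia.
rewrite -sum1_card big_mkcond [RHS]big_mkcond; apply: eq_bigr => e _.
by rewrite inE; case: (e \in M).
Qed.

Lemma coloured_edges_cap e :
  e \in coloured_edges -> e \in Ecap C2 v (scap T s (xi e)).
Proof. by rewrite inE => /andP[/M_coloured]; case: (xi e) => [j|[]]. Qed.

Lemma matched_edge_vL_coloured i : matched_edge M (vL i) \in coloured_edges.
Proof.
have [eM ie] := matched_edgeP M_cover (vL i); rewrite inE eM /=.
apply: contraL ie => /eqP xi_bot; apply: Ebot_notL.
by have := M_coloured eM; rewrite xi_bot.
Qed.

Lemma coloured_edge_reps :
  (forall j : 'I_p, exists2 e, e \in M & xi e = inl j) ->
  exists rep : 'I_p -> {set vtx n C2},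
    [/\ injective rep, forall j, rep j \in coloured_edges & forall j, xi (rep j) = inl j].
Proof.
move=> xi_inl; have rep_ex j : exists e, (e \in M) && (xi e == inl j).
  by have [e eM xe] := xi_inl j; exists e; rewrite eM xe /=.
have [rep_M xi_rep] : (forall j, xchoose (rep_ex j) \in M) /\
                      (forall j, xi (xchoose (rep_ex j)) = inl j).
  by split=> j; case/andP: (xchooseP (rep_ex j)) => // _ /eqP.
exists (fun j => xchoose (rep_ex j)); split=> // [j j'|j].
  by move/(congr1 xi); rewrite !xi_rep => -[].
by rewrite inE rep_M xi_rep.
Qed.

Lemma coloured_edges_assignment (K : finType) (E : K -> {set vtx n C2}) :
  injective E -> coloured_edges =i codom E ->
  exists f : 'I_n -> K, forall i k, (f i == k) = (vL i \in E k).
Proof.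
move=> E_inj G_E.
have f_ex i : exists k, E k == matched_edge M (vL i).
  have /codomP[k ->] : matched_edge M (vL i) \in codom E by rewrite -G_E matched_edge_vL_coloured.
  by exists k.
exists (fun i => xchoose (f_ex i)) => i k; have /eqP Efi := xchooseP (f_ex i).
rewrite -(inj_eq E_inj) Efi; apply/eqP/idP => [<-|ik]; first exact: (matched_edgeP M_cover _).2.
have : E k \in coloured_edges by rewrite G_E codom_f.
by rewrite inE => /andP[EkM _]; exact: esym (matched_edge_uniq M_cover EkM ik).
Qed.

End MatchingToPacking.

Lemma matching_to_packing d n m p (T : 'rV[rat]_d) (v : 'I_n -> 'rV[rat]_d)
    (s : 'I_p -> 'rV[rat]_d) :
  (m <= n)%N -> (p <= m)%N -> (forall i, vle (s i) T) ->
  potrm_yes (@EG d n (n - m) p m T v s) (Cprime p m (n - m)) (@lam d n (n - m) p m T v s)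
            (fun _ _ => 1) (n + (n - m))%:R ->
  exists f : 'I_n -> ('I_p + 'I_(m - p))%type,
    (forall k, exists i, f i = k) /\
    (forall k, vle (\sum_(i | f i == k) v i) (cont_cap T s k)).
Proof.
move=> le_mn le_pm s_le_T [M [xi [[_ M_cover] _ xi_onto xi_lam _]]].
have M_col e : e \in M -> e \in Ecol (n - m) T v s (xi e).
  by move/xi_lam; rewrite inE => /andP[].
have cardG : #|coloured_edges M xi| = (p + (m - p))%N.
  by have := card_coloured_edges M_cover M_col; lia.
have [|rep [rep_inj rep_G xi_rep]] := coloured_edge_reps (xi := xi) (M := M).
  by move=> j; apply: xi_onto; rewrite !inE.
have [E [E_inj E_rep G_E]] := extend_ord_injection rep_inj rep_G cardG.
have [f fE] := coloured_edges_assignment M_cover M_col E_inj G_E.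
have E_cap k : E k \in Ecap (n - m) v (scap T s (xi (E k))).
  by apply: (coloured_edges_cap M_col); rewrite G_E codom_f.
exists f; split=> [k|k].
  by have [i ik] := Ecap_hasL (E_cap k); exists i; apply/eqP; rewrite fE.
rewrite (eq_bigl _ _ (fE ^~ k)); apply: vle_trans (Ecap_sum_le (E_cap k)) _.
by case: k => [j|b] /=; [rewrite E_rep xi_rep; exact: vle_refl | exact: scap_le].
Qed.

Lemma packing_fiber3 d n p q (T : 'rV[rat]_d) (v : 'I_n -> 'rV[rat]_d)
    (s : 'I_p -> 'rV[rat]_d) (f : 'I_n -> ('I_p + 'I_q)%type) :
  (forall i, nonneg (v i)) -> three_incompatible T v -> (forall i, vle (s i) T) ->
  (forall k, vle (\sum_(i | f i == k) v i) (cont_cap T s k)) ->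
  forall i j k, f j = f i -> f k = f i -> [|| j == i, k == i | k == j].
Proof.
move=> v_ge0 v3 s_le_T f_cap i j k fj fk; apply/contraT => /norP[ji /norP[ki kj]].
have [c Tc] : exists c, T 0 c < (v i + v j + v k) 0 c.
  by apply: v3; rewrite // eq_sym.
suff : (v i + v j + v k) 0 c <= T 0 c by rewrite leNgt Tc.
have /forallP/(_ c) := vle_trans (f_cap (f i)) (cont_cap_le s_le_T (f i)).
apply: le_trans; rewrite summxE (bigD1 i) //= (bigD1 j) /= ?fj ?eqxx ?ji //.
rewrite (bigD1 k) /= ?fk ?eqxx ?ki ?kj // !addrA !mxE lerDl sumr_ge0 // => l _.
by have /forallP/(_ c) := v_ge0 l; rewrite mxE.
Qed.

Section PairingMatching.
Variables (d n C2 p m : nat) (T : 'rV[rat]_d) (v : 'I_n -> 'rV[rat]_d) (s : 'I_p -> 'rV[rat]_d).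
Variables (partner : 'I_n -> option 'I_n) (g : 'I_(2 * C2) -> 'I_n) (colour_of : 'I_n -> color p).
Hypothesis partner_spec :
  forall i j, partner i = Some j -> [/\ j != i, partner j = Some i & colour_of j = colour_of i].
Hypothesis g_inj : injective g.
Hypothesis g_codom : forall i, (i \in codom g) = (partner i != None).
Hypothesis colour_of_C : forall i, colour_of i \in Cset p m.
Hypothesis colour_of_cap : forall i, vle (v i + oapp v 0 (partner i)) (scap T s (colour_of i)).

Lemma pick_gP i : if [pick b | g b == i] is Some b then g b = i else partner i = None.
Proof.
case: pickP => [b /eqP //|no_b]; apply/eqP; rewrite -[_ == None]negbK -g_codom.
by apply/codomP => -[b gb]; have := no_b b; rewrite /= gb eqxx.
Qed.

Definition pairing_mate (x : vtx n C2) : vtx n C2 :=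
  match x with
  | inl (inl i) => if partner i is Some j then vL j else vL' i
  | inl (inr i) => if [pick b | g b == i] is Some b then vB b else vL i
  | inr b => vL' (g b)
  end.

Local Notation pair_edge x := [set x; pairing_mate x].

Lemma pairing_mateK : involutive pairing_mate.
Proof.
case=> [[i|i]|b] /=.
- case pi: (partner i) => [j|] /=; first by have [_ -> _] := partner_spec pi.
  have := pick_gP i; case: pickP => //= b _ gb.
  by have := codom_f g b; rewrite gb g_codom pi.
- have := pick_gP i; case: pickP => [b _ /= -> //|_ /= -> //].
- have := pick_gP (g b); case: pickP => [b' _ /= /g_inj -> //|_ /= pgb].
  by have := codom_f g b; rewrite g_codom pgb.
Qed.

Lemma pairing_mate_neq x : pairing_mate x != x.
Proof.
case: x => [[i|i]|b] //=.
  by case pi: (partner i) => [j|]; rewrite -!sum_eqE //=; have [] := partner_spec pi.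
by case: pickP => *; rewrite -!sum_eqE.
Qed.

Definition pairing_colour (e : {set vtx n C2}) : color p :=
  if [pick i | vL i \in e] is Some i then colour_of i else colBot.

Lemma pairing_colour_vL i : pairing_colour (pair_edge (vL i)) = colour_of i.
Proof.
rewrite /pairing_colour /=; case: pickP => [i'|no_i]; last by have := no_i i; rewrite !inE eqxx.
case pi: (partner i) => [j|]; rewrite !inE -!sum_eqE /= -!sum_eqE /= ?orbF; last by move/eqP->.
by case/orP=> /eqP->; [|have [_ _ ->] := partner_spec pi].
Qed.

Lemma pairing_colour_Ebot e : e \in Ebot n C2 -> pairing_colour e = colBot.
Proof.
by move=> e_bot; rewrite /pairing_colour; case: pickP => // i; rewrite (negbTE (Ebot_notL _ e_bot)).
Qed.

Lemma pairing_mate_vB_Ebot b : pair_edge (vB b) \in Ebot n C2.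
Proof. by rewrite setUC; apply/imsetP; exists (g b, b). Qed.

Lemma pairing_colour_lam x : pairing_colour (pair_edge x) \in lam m T v s (pair_edge x).
Proof.
have lam_vL i : pairing_colour (pair_edge (vL i)) \in lam m T v s (pair_edge (vL i)).
  rewrite pairing_colour_vL inE Cset_Cprime // (Ecol_Cset C2 T v s (colour_of_C i)) /=; apply/EcapP.
  case pi: (partner i) => [j|]; have := colour_of_cap i; rewrite pi /= => cap.
    by left; exists i, j; have [ji _ _] := partner_spec pi; rewrite eq_sym ji.
  by right; exists i; rewrite addr0 in cap.
have lam_vB b : pairing_colour (pair_edge (vB b)) \in lam m T v s (pair_edge (vB b)).
  rewrite pairing_colour_Ebot ?pairing_mate_vB_Ebot // inE pairing_mate_vB_Ebot colBot_Cprime //.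
  by have := ltn_ord b; lia.
case: x => [[i|i]|b]; [exact: lam_vL | | exact: lam_vB].
rewrite -{1 3}[inl (inr i)]pairing_mateK setUC /=.
by case: pickP => [b _|_]; [exact: lam_vB | exact: lam_vL].
Qed.

Hypothesis colour_of_onto : forall c, c \in Cset p m -> exists i, colour_of i = c.

Lemma pairing_colour_onto c :
  c \in Cprime p m C2 -> exists2 e, e \in mate_edges pairing_mate & pairing_colour e = c.
Proof.
rewrite inE => /orP[/colour_of_onto[i <-]|].
  by exists (pair_edge (vL i)); [exact: imset_f | exact: pairing_colour_vL].
case: ifP => [C2_gt0|]; rewrite ?inE // => /eqP->.
have b : 'I_(2 * C2) by exists 0%N; lia.
exists (pair_edge (vB b)); first exact: imset_f.
exact/pairing_colour_Ebot/pairing_mate_vB_Ebot.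
Qed.

Lemma card_pairing_edges : #|mate_edges pairing_mate| = (n + C2)%N.
Proof.
have := card_mate_edges pairing_mateK pairing_mate_neq.
by rewrite /vtx !card_sum !card_ord; lia.
Qed.

End PairingMatching.

Definition container_colour p q (k : 'I_p + 'I_q) : color p :=
  if k is inl j then inl j else colTop.

Lemma container_colour_cap d p q (T : 'rV[rat]_d) (s : 'I_p -> 'rV[rat]_d) (k : 'I_p + 'I_q) :
  scap T s (container_colour k) = cont_cap T s k.
Proof. by case: k. Qed.

Lemma container_colour_Cset p m (k : 'I_p + 'I_(m - p)) : container_colour k \in Cset p m.
Proof. by rewrite inE; case: k => //= b; have := ltn_ord b; lia. Qed.

Lemma container_colour_onto p m c :
  c \in Cset p m -> exists k : 'I_p + 'I_(m - p), container_colour k = c.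
Proof.
case: c => [j _|[]]; [by exists (inl j) | | by rewrite inE].
rewrite inE /= => lt_pm; have b : 'I_(m - p) by exists 0%N; lia.
by exists (inr b).
Qed.

Lemma packing_to_matching d n m p (T : 'rV[rat]_d) (v : 'I_n -> 'rV[rat]_d)
    (s : 'I_p -> 'rV[rat]_d) :
  (forall i, nonneg (v i)) -> three_incompatible T v -> (forall i, vle (s i) T) ->
  (m <= n)%N -> (p <= m)%N ->
  (exists f : 'I_n -> ('I_p + 'I_(m - p))%type,
    (forall k, exists i, f i = k) /\
    (forall k, vle (\sum_(i | f i == k) v i) (cont_cap T s k))) ->
  potrm_yes (@EG d n (n - m) p m T v s) (Cprime p m (n - m)) (@lam d n (n - m) p m T v s)
            (fun _ _ => 1) (n + (n - m))%:R.
Proof.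
move=> v_ge0 v3 s_le_T le_mn le_pm [f [f_onto f_cap]].
have fiber3 := packing_fiber3 v_ge0 v3 s_le_T f_cap.
have /ord_enumeration[g [g_inj paired_g]] : #|paired f| = (2 * (n - m))%N.
  by have := card_paired fiber3 f_onto; rewrite card_sum !card_ord; lia.
pose colour_of i := container_colour (f i).
have partner_spec i j : fiber_partner f i = Some j ->
    [/\ j != i, fiber_partner f j = Some i & colour_of j = colour_of i].
  by case/(fiber_partnerP fiber3) => fj ji ->; rewrite /colour_of fj.
have g_codom i : (i \in codom g) = (fiber_partner f i != None) by rewrite -paired_g inE.
have colour_of_C i : colour_of i \in Cset p m := container_colour_Cset (f i).
have colour_of_cap i : vle (v i + oapp v 0 (fiber_partner f i)) (scap T s (colour_of i)).
  by rewrite -(big_fiber fiber3) container_colour_cap; exact: f_cap.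
have colour_of_onto c : c \in Cset p m -> exists i, colour_of i = c.
  by case/container_colour_onto => k <-; have [i <-] := f_onto k; exists i.
have colour_lam := pairing_colour_lam partner_spec g_inj g_codom colour_of_C colour_of_cap.
exists (mate_edges (pairing_mate (fiber_partner f) g)), (pairing_colour colour_of); split.
- split; last exact/mate_edges_cover/(pairing_mateK partner_spec g_inj g_codom).
  by apply/subsetP => _ /imsetP[x _ ->]; exact: lam_EG (colour_lam x).
- by move=> _ /imsetP[x _ ->]; have := colour_lam x; rewrite inE => /andP[].
- exact: (pairing_colour_onto g partner_spec colour_of_onto).
- by move=> _ /imsetP[x _ ->]; exact: colour_lam.
- by rewrite sumr_const (card_pairing_edges partner_spec g_inj g_codom).
Qed.

Theorem lemma6 (d n m p : nat) (T : 'rV[rat]_d) (v : 'I_n -> 'rV[rat]_d)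
  (s : 'I_p -> 'rV[rat]_d) :
  (1 <= d)%N ->
  nonneg T ->
  injective v ->
  (forall i, nonneg (v i)) ->
  three_incompatible T v ->
  (n <= 2 * m)%N -> (m <= n)%N ->
  (p <= m)%N ->
  (forall i, nonneg (s i) && vle (s i) T) ->
  (exists f : 'I_n -> ('I_p + 'I_(m - p))%type,
      (forall k, exists i, f i = k) /\
      (forall k, vle (\sum_(i | f i == k) v i) (cont_cap T s k)))
  <->
  potrm_yes (@EG d n (n - m) p m T v s) (Cprime p m (n - m)) (@lam d n (n - m) p m T v s)
            (fun _ _ => 1) (n + (n - m))%:R.
Proof.
move=> _ _ _ v_ge0 v3 _ le_mn le_pm s_spec.
have s_le_T i : vle (s i) T by case/andP: (s_spec i).
by split; [exact: packing_to_matching | exact: matching_to_packing].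
Qed.
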